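(* Let $\alpha=(\alpha_n)_{n\in\mathbb{N}}\in\ell^2$ and let $J_0=\sup_{m\ge0}(m+1)^{1/2}\big(\sum_{k=m}^\infty|\alpha_k|^2\big)^{1/2}$. The Rhaly operator $R_\alpha$ is bounded on $\ell^2$ if and only if $J_0<\infty$, and in this case $J_0\le\|R_\alpha\|\le2\sqrt2\,J_0$.
   Context: $\mathbb{N}=\{0,1,2,\dots\}$; $\ell^2$ is the space of square-summable functions $\mathbb{N}\to\mathbb{C}$. The Rhaly operator is $(R_\alpha f)(k)=\alpha_k\sum_{j=0}^k f(j)$, and $\|R_\alpha\|=\sup_{\|f\|_2=1}\|R_\alpha f\|_2$. *)

From Stdlib Require Import Reals.
From Coquelicot Require Export Coquelicot.
Open Scope R_scope.

Definition in_l2 (f : nat -> C) : Prop :=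
  ex_series (fun n => (Cmod (f n)) ^ 2).

(* the l^2 norm (meaningful for f in l^2) *)
Definition l2norm (f : nat -> C) : R :=
  sqrt (Series (fun n => (Cmod (f n)) ^ 2)).

Fixpoint psum (f : nat -> C) (k : nat) : C :=
  match k with
  | O => f O
  | S k' => Cplus (psum f k') (f (S k'))
  end.

Definition rhaly (alpha f : nat -> C) : nat -> C :=
  fun k => Cmult (alpha k) (psum f k).

Definition rhaly_bounded (alpha : nat -> C) : Prop :=
  exists M : R, forall f, in_l2 f ->
    in_l2 (rhaly alpha f) /\ l2norm (rhaly alpha f) <= M * l2norm f.

Definition rhaly_norm (alpha : nat -> C) : Rbar :=
  Lub_Rbar (fun x => exists f, in_l2 f /\ l2norm f = 1 /\ x = l2norm (rhaly alpha f)).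

Definition J0 (alpha : nat -> C) : Rbar :=
  Lub_Rbar (fun x => exists m : nat,
    x = sqrt (INR (m + 1)) * sqrt (Series (fun n => (Cmod (alpha (n + m)%nat)) ^ 2))).

From Stdlib Require Import Reals Lra Lia.
From Coquelicot Require Import Coquelicot.
Open Scope R_scope.

(* Write [w k = |alpha k|^2] and [T m = sum_(k >= m) w k], so that
   [J0 = sup_m sqrt((m+1) T m)].  Testing [R_alpha] on the normalised indicator of
   [{0, ..., m}] gives [||R_alpha|| >= sqrt((m+1) T m)], hence [J0 <= ||R_alpha||].
   Conversely, Cauchy-Schwarz with weights [sqrt(j+1)] together with
   [sum_(j <= k) 1 / sqrt(j+1) <= 2 sqrt(k+1)] gives
   [|(R_alpha f) k|^2 <= 2 w k sqrt(k+1) sum_(j <= k) |f j|^2 sqrt(j+1)].  Exchanging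
   the order of summation leaves the weighted tails [sum_(k >= j) w k sqrt(k+1)],
   which Abel summation against [(k+1) T k <= J0^2] bounds by [2 J0^2 / sqrt(j+1)].
   Hence [||R_alpha f|| <= 2 J0 ||f||], a better constant than [2 sqrt 2]. *)

Lemma sum_Sn_R (a : nat -> R) n : sum_n a (S n) = sum_n a n + a (S n).
Proof. exact (sum_Sn a n). Qed.

Lemma sum_n_Rmult_l (c : R) (a : nat -> R) N :
  sum_n (fun j => c * a j) N = c * sum_n a N :> R.
Proof. exact (sum_n_mult_l c a N). Qed.

Section NonnegSeries.

Variable a : nat -> R.
Hypothesis a_ge0 : forall n, 0 <= a n.

Lemma sum_n_m_ge0 n m : 0 <= sum_n_m a n m.
Proof.
  rewrite <- (Rmult_0_r (INR (S m - n))), <- sum_n_m_const.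
  now apply sum_n_m_le.
Qed.

Lemma sum_n_ge0 N : 0 <= sum_n a N.
Proof. apply sum_n_m_ge0. Qed.

Lemma sum_n_le_Series N : ex_series a -> sum_n a N <= Series a.
Proof.
  intros [l Hl]. rewrite (is_series_unique _ _ Hl).
  apply (is_lim_seq_incr_compare (sum_n a)); [exact Hl |].
  intros n. rewrite sum_Sn_R. specialize (a_ge0 (S n)). lra.
Qed.

Lemma Series_ge0 : ex_series a -> 0 <= Series a.
Proof.
  intros E. eapply Rle_trans; [apply sum_n_ge0 | exact (sum_n_le_Series 0 E)].
Qed.

Lemma ex_series_le_bound M :
  (forall N, sum_n a N <= M) -> ex_series a /\ Series a <= M.
Proof.
  intros HM.
  destruct (ex_finite_lim_seq_incr (sum_n a) M) as [l Hl]; auto.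
  { intros n. rewrite sum_Sn_R. specialize (a_ge0 (S n)). lra. }
  split; [now exists l |].
  rewrite (is_series_unique a l Hl).
  apply (is_lim_seq_le _ _ l M HM Hl (is_lim_seq_const M)).
Qed.

Lemma ex_series_le_nonneg b : (forall n, a n <= b n) -> ex_series b -> ex_series a.
Proof.
  intros Hab Eb. apply (ex_series_le a b); [| exact Eb].
  intros n. change (Rabs (a n) <= b n). now rewrite Rabs_pos_eq.
Qed.

Lemma sum_n_m_shift m d :
  sum_n_m a m (d + m) = sum_n (fun n => a (n + m)%nat) d.
Proof.
  induction d as [| d IH].
  - now rewrite sum_n_n, sum_O.
  - rewrite Nat.add_succ_l, sum_n_Sm by lia. now rewrite IH, sum_Sn.
Qed.

Lemma ex_series_shift m : ex_series a -> ex_series (fun n => a (n + m)%nat).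
Proof.
  intros E. apply (ex_series_incr_n a m) in E.
  eapply ex_series_ext; [| exact E]. intros n. now rewrite Nat.add_comm.
Qed.

Lemma Series_shift_le m :
  ex_series a -> Series (fun n => a (n + m)%nat) <= Series a.
Proof.
  intros E. destruct m as [| m].
  - right. apply Series_ext. intros n. now rewrite Nat.add_0_r.
  - rewrite (Series_incr_n a (S m)) by (lia || exact E).
    rewrite (Series_ext _ (fun k => a (S m + k)%nat))
      by (intros n; now rewrite Nat.add_comm).
    pose proof (sum_n_ge0 m) as Hm. rewrite sum_n_Reals in Hm. simpl. lra.
Qed.

End NonnegSeries.

Lemma sum_n_m_le_Series_shift (a : nat -> R) m N :
  (forall n, 0 <= a n) -> ex_series a ->
  sum_n_m a m N <= Series (fun n => a (n + m)%nat).
Proof.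
  intros a_ge0 E.
  assert (shift_ge0 : forall n, 0 <= a (n + m)%nat) by auto.
  pose proof (ex_series_shift a m E) as Em.
  destruct (Nat.le_gt_cases m N) as [HmN | HNm].
  - replace N with ((N - m) + m)%nat by lia. rewrite sum_n_m_shift.
    now apply sum_n_le_Series.
  - rewrite sum_n_m_zero by exact HNm. now apply Series_ge0.
Qed.

Section FiniteSupport.

Variables (a : nat -> R) (m : nat).
Hypothesis a_support : forall n, (m < n)%nat -> a n = 0.

Lemma sum_n_support k : (m <= k)%nat -> sum_n a k = sum_n a m.
Proof.
  induction k as [| k IH]; intros Hk.
  - now replace m with 0%nat by lia.
  - destruct (Nat.eq_dec m (S k)) as [<- | Hne]; [reflexivity |].
    rewrite sum_Sn_R, IH, a_support by lia. apply Rplus_0_r.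
Qed.

Lemma is_series_support : is_series a (sum_n a m).
Proof.
  apply (is_lim_seq_ext_loc (fun _ => sum_n a m) (sum_n a) (sum_n a m));
    [| apply is_lim_seq_const].
  exists m. intros k Hk. symmetry. now apply sum_n_support.
Qed.

End FiniteSupport.

Lemma two_mul_le_add X Y Z : 0 <= X -> 0 <= Y -> Z ^ 2 <= X * Y -> 2 * Z <= X + Y.
Proof.
  intros HX HY HZ. destruct (Rle_or_lt (2 * Z) (X + Y)) as [| Hlt]; [assumption |].
  pose proof (pow2_ge_0 (X - Y)). nra.
Qed.

Lemma sum_n_sq_le_weighted (a c : nat -> R) k :
  (forall j, 0 < c j) ->
  sum_n a k ^ 2 <= sum_n (fun j => a j ^ 2 / c j) k * sum_n c k.
Proof.
  intros c_gt0. induction k as [| k IH].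
  - rewrite !sum_O. specialize (c_gt0 0%nat). right. field. lra.
  - rewrite !sum_Sn_R.
    set (A := sum_n a k) in *. set (W := sum_n c k) in *.
    set (Q := sum_n (fun j => a j ^ 2 / c j) k) in *.
    set (x := a (S k)). set (y := c (S k)).
    assert (y_gt0 : 0 < y) by apply c_gt0.
    assert (Q_ge0 : 0 <= Q).
    { apply sum_n_ge0. intros j. specialize (c_gt0 j).
      apply Rmult_le_pos; [apply pow2_ge_0 | now apply Rlt_le, Rinv_0_lt_compat]. }
    assert (W_ge0 : 0 <= W) by (apply sum_n_ge0; intros j; now apply Rlt_le).
    assert (cross : 2 * (A * x) <= Q * y + x ^ 2 / y * W).
    { apply two_mul_le_add.
      - nra.
      - apply Rmult_le_pos; [| exact W_ge0].
        apply Rmult_le_pos; [apply pow2_ge_0 | now apply Rlt_le, Rinv_0_lt_compat].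
      - replace (Q * y * (x ^ 2 / y * W)) with (Q * W * x ^ 2) by (field; lra).
        rewrite Rpow_mult_distr. apply Rmult_le_compat_r; [apply pow2_ge_0 | exact IH]. }
    replace ((A + x) ^ 2) with (A ^ 2 + 2 * (A * x) + x ^ 2) by ring.
    replace ((Q + x ^ 2 / y) * (W + y)) with (Q * W + (Q * y + x ^ 2 / y * W) + x ^ 2)
      by (field; lra).
    lra.
Qed.

Lemma sqrt_INR_S_gt0 k : 0 < sqrt (INR (S k)).
Proof. apply sqrt_lt_R0, lt_0_INR. lia. Qed.

Lemma sqrt_INR_S_sq k : sqrt (INR (S k)) ^ 2 = INR (S k).
Proof. apply pow2_sqrt, pos_INR. Qed.

Lemma sum_inv_sqrt_le k :
  sum_n (fun j => / sqrt (INR (S j))) k <= 2 * sqrt (INR (S k)).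
Proof.
  induction k as [| k IH].
  - rewrite sum_O. simpl INR. rewrite sqrt_1. lra.
  - rewrite sum_Sn_R.
    pose proof (sqrt_INR_S_gt0 (S k)) as y_gt0.
    set (x := sqrt (INR (S k))) in *. set (y := sqrt (INR (S (S k)))) in *.
    assert (Hy : y ^ 2 = x ^ 2 + 1)
      by (unfold x, y; rewrite !sqrt_INR_S_sq; apply S_INR).
    (* [y ^ 2 - x ^ 2 = 1] turns [1 <= 2 * y * (y - x)] into [0 <= (y - x) ^ 2]. *)
    assert (/ y <= 2 * (y - x)).
    { apply (Rmult_le_reg_r y); [exact y_gt0 |].
      rewrite Rinv_l by lra. pose proof (pow2_ge_0 (y - x)). nra. }
    lra.
Qed.

Lemma sum_n_mult_sum_n_swap (c u : nat -> R) N :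
  sum_n (fun k => c k * sum_n u k) N = sum_n (fun j => u j * sum_n_m c j N) N :> R.
Proof.
  induction N as [| N IH].
  - rewrite !sum_O, sum_n_n. apply Rmult_comm.
  - rewrite !sum_Sn_R, IH, sum_n_n.
    rewrite (sum_n_ext_loc (fun j => u j * sum_n_m c j (S N))
                           (fun j => u j * sum_n_m c j N + c (S N) * u j)).
    + assert (Hsplit : sum_n (fun j => u j * sum_n_m c j N + c (S N) * u j) N
                       = sum_n (fun j => u j * sum_n_m c j N) N + c (S N) * sum_n u N).
      { rewrite <- sum_n_Rmult_l.
        apply (sum_n_plus (fun j => u j * sum_n_m c j N) (fun j => c (S N) * u j)). }
      rewrite Hsplit. ring.
    + intros j Hj. rewrite (sum_n_Sm c) by lia. unfold plus; simpl. ring.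
Qed.

Section WeightedTail.

Variables (w s : nat -> R) (B : R).
Hypothesis w_ge0 : forall k, 0 <= w k.
Hypothesis s_gt0 : forall k, 0 < s k.
Hypothesis s_incr : forall k, s k <= s (S k).
Hypothesis tail_bound : forall m N, s m ^ 2 * sum_n_m w m N <= B.

Lemma tail_bound_div_ge0 j : 0 <= B / s j.
Proof.
  apply Rdiv_le_0_compat; [| apply s_gt0].
  eapply Rle_trans; [| apply (tail_bound 0%nat 0%nat)].
  apply Rmult_le_pos; [apply pow2_ge_0 | now apply sum_n_m_ge0].
Qed.

Lemma weighted_tail_abel d j :
  sum_n_m (fun k => w k * s k) j (d + j) <= s j * sum_n_m w j (d + j) + B / s j.
Proof.
  revert j. induction d as [| d IH]; intros j.
  - rewrite Nat.add_0_l, !sum_n_n. pose proof (tail_bound_div_ge0 j). lra.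
  - rewrite !(sum_Sn_m _ j) by lia. unfold plus; simpl.
    replace (S (d + j)) with (d + S j)%nat by lia.
    specialize (IH (S j)). pose proof (tail_bound (S j) (d + S j)%nat) as HT.
    set (T := sum_n_m w (S j) (d + S j)) in *.
    pose proof (s_gt0 j). pose proof (s_gt0 (S j)). pose proof (s_incr j).
    assert (T_ge0 : 0 <= T) by now apply sum_n_m_ge0.
    (* [s j * s (S j) * T <= s (S j) ^ 2 * T <= B] pays for moving the weight of the
       tail [T] from [s (S j)] down to [s j]. *)
    assert (shift : (s (S j) - s j) * T <= B / s j - B / s (S j)).
    { replace (B / s j - B / s (S j)) with ((s (S j) - s j) * (B / (s j * s (S j))))
        by (field; lra).
      apply Rmult_le_compat_l; [lra |].
      apply (Rmult_le_reg_r (s j * s (S j))); [nra |].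
      replace (B / (s j * s (S j)) * (s j * s (S j))) with B by (field; lra).
      apply Rle_trans with (s (S j) ^ 2 * T); [| exact HT].
      pose proof (Rmult_le_pos _ _ T_ge0 (Rlt_le _ _ (s_gt0 (S j)))). nra. }
    lra.
Qed.

Lemma weighted_tail_le j N : sum_n_m (fun k => w k * s k) j N <= 2 * B / s j.
Proof.
  pose proof (tail_bound_div_ge0 j). pose proof (s_gt0 j).
  destruct (Nat.le_gt_cases j N) as [HjN | HNj].
  - replace N with ((N - j) + j)%nat by lia.
    eapply Rle_trans; [apply weighted_tail_abel |].
    pose proof (tail_bound j ((N - j) + j)%nat).
    assert (s j * sum_n_m w j (N - j + j) <= B / s j).
    { apply (Rmult_le_reg_r (s j)); [lra |].
      replace (B / s j * s j) with B by (field; lra). nra. }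
    unfold Rdiv in *. lra.
  - rewrite sum_n_m_zero by exact HNj. change (0 <= 2 * B / s j).
    unfold Rdiv in *. lra.
Qed.

End WeightedTail.

Lemma sum_n_hardy_le (w a : nat -> R) B :
  (forall k, 0 <= w k) -> (forall k, 0 <= a k) ->
  (forall m N, INR (S m) * sum_n_m w m N <= B) ->
  forall N, sum_n (fun k => w k * sum_n a k ^ 2) N <= 4 * B * sum_n (fun j => a j ^ 2) N.
Proof.
  intros w_ge0 a_ge0 HB N.
  set (s := fun k => sqrt (INR (S k))).
  assert (s_gt0 : forall k, 0 < s k) by (intros k; apply sqrt_INR_S_gt0).
  set (u := fun j => a j ^ 2 * s j).
  assert (u_ge0 : forall j, 0 <= u j)
    by (intros j; apply Rmult_le_pos; [apply pow2_ge_0 | now apply Rlt_le]).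
  assert (sq_sum_le : forall k, sum_n a k ^ 2 <= 2 * s k * sum_n u k).
  { intros k. eapply Rle_trans.
    { apply (sum_n_sq_le_weighted a (fun j => / s j)).
      intros j. now apply Rinv_0_lt_compat. }
    rewrite (sum_n_ext (fun j => a j ^ 2 / / s j) u)
      by (intros j; unfold u, Rdiv; now rewrite Rinv_inv).
    rewrite Rmult_comm. apply Rmult_le_compat_r; [now apply sum_n_ge0 |].
    apply sum_inv_sqrt_le. }
  assert (tail_le : forall j, sum_n_m (fun k => w k * s k) j N <= 2 * B / s j).
  { intros j. apply (weighted_tail_le w s B); [exact w_ge0 | exact s_gt0 | |].
    - intros k. apply sqrt_le_1_alt, le_INR. lia.
    - intros m M. unfold s. rewrite sqrt_INR_S_sq. apply HB. }
  apply Rle_trans with (sum_n (fun k => 2 * (w k * s k * sum_n u k)) N).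
  { apply sum_n_m_le. intros k.
    replace (2 * (w k * s k * sum_n u k)) with (w k * (2 * s k * sum_n u k)) by ring.
    apply Rmult_le_compat_l; [apply w_ge0 | apply sq_sum_le]. }
  rewrite sum_n_Rmult_l.
  rewrite (sum_n_mult_sum_n_swap (fun k => w k * s k) u).
  apply Rle_trans with (2 * sum_n (fun j => 2 * B * a j ^ 2) N).
  { apply Rmult_le_compat_l; [lra |]. apply sum_n_m_le. intros j.
    replace (2 * B * a j ^ 2) with (u j * (2 * B / s j))
      by (unfold u; specialize (s_gt0 j); field; lra).
    apply Rmult_le_compat_l; [apply u_ge0 | apply tail_le]. }
  rewrite sum_n_Rmult_l. lra.
Qed.

Lemma psum_sum_n (f : nat -> C) k : psum f k = sum_n f k.
Proof.
  induction k as [| k IH]; simpl.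
  - now rewrite sum_O.
  - now rewrite sum_Sn, IH.
Qed.

Lemma Cmod_psum_le (f : nat -> C) k : Cmod (psum f k) <= sum_n (fun j => Cmod (f j)) k.
Proof. rewrite psum_sum_n. apply (norm_sum_n_m f 0 k). Qed.

Definition J0_term (alpha : nat -> C) (m : nat) : R :=
  sqrt (INR (m + 1)) * sqrt (Series (fun n => Cmod (alpha (n + m)%nat) ^ 2)).

Lemma J0_term_ge0 alpha m : 0 <= J0_term alpha m.
Proof. apply Rmult_le_pos; apply sqrt_pos. Qed.

Lemma J0_term_sq alpha m : in_l2 alpha ->
  J0_term alpha m ^ 2 = INR (S m) * Series (fun n => Cmod (alpha (n + m)%nat) ^ 2).
Proof.
  intros Halpha. unfold J0_term. rewrite Nat.add_1_r, Rpow_mult_distr, sqrt_INR_S_sq.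
  rewrite pow2_sqrt; [reflexivity |].
  apply Series_ge0; [intros n; apply pow2_ge_0 |].
  apply (ex_series_shift (fun n => Cmod (alpha n) ^ 2)), Halpha.
Qed.

Lemma rhaly_l2_le alpha J :
  in_l2 alpha -> (forall m, J0_term alpha m <= J) ->
  forall f, in_l2 f ->
  in_l2 (rhaly alpha f) /\ l2norm (rhaly alpha f) <= 2 * J * l2norm f.
Proof.
  intros Halpha HJ f Hf.
  set (w := fun k => Cmod (alpha k) ^ 2).
  set (a := fun j => Cmod (f j)).
  assert (w_ge0 : forall k, 0 <= w k) by (intros k; apply pow2_ge_0).
  assert (a_ge0 : forall j, 0 <= a j) by (intros j; apply Cmod_ge_0).
  assert (J_ge0 : 0 <= J) by exact (Rle_trans _ _ _ (J0_term_ge0 alpha 0) (HJ 0%nat)).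
  assert (HB : forall m N, INR (S m) * sum_n_m w m N <= J ^ 2).
  { intros m N. eapply Rle_trans.
    - apply Rmult_le_compat_l; [apply pos_INR |].
      exact (sum_n_m_le_Series_shift w m N w_ge0 Halpha).
    - unfold w. rewrite <- J0_term_sq by exact Halpha.
      apply pow_incr. split; [apply J0_term_ge0 | apply HJ]. }
  assert (term_le : forall k, Cmod (rhaly alpha f k) ^ 2 <= w k * sum_n a k ^ 2).
  { intros k. unfold rhaly. rewrite Cmod_mult, Rpow_mult_distr.
    apply Rmult_le_compat_l; [apply pow2_ge_0 |].
    apply pow_incr. split; [apply Cmod_ge_0 | apply Cmod_psum_le]. }
  set (Q := Series (fun j => Cmod (f j) ^ 2)).
  destruct (ex_series_le_bound (fun k => Cmod (rhaly alpha f k) ^ 2)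
              (fun k => pow2_ge_0 _) (4 * J ^ 2 * Q)) as [HR HRQ].
  { intros N. eapply Rle_trans; [apply sum_n_m_le; intros k; apply term_le |].
    eapply Rle_trans; [apply (sum_n_hardy_le w a (J ^ 2) w_ge0 a_ge0 HB) |].
    apply Rmult_le_compat_l; [nra |].
    apply sum_n_le_Series; [intros j; apply pow2_ge_0 | exact Hf]. }
  split; [exact HR |].
  assert (Q_ge0 : 0 <= Q) by (apply Series_ge0; [intros j; apply pow2_ge_0 | exact Hf]).
  unfold l2norm. fold Q.
  eapply Rle_trans; [apply sqrt_le_1_alt, HRQ |].
  replace (4 * J ^ 2) with ((2 * J) ^ 2) by ring.
  rewrite sqrt_mult, sqrt_pow2 by nra. apply Rle_refl.
Qed.

Definition unit_box (m j : nat) : R :=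
  if (j <=? m)%nat then / sqrt (INR (S m)) else 0.

Lemma unit_box_support m n : (m < n)%nat -> unit_box m n = 0.
Proof. intros Hmn. unfold unit_box. now rewrite (proj2 (Nat.leb_gt n m) Hmn). Qed.

Lemma unit_box_ge0 m j : 0 <= unit_box m j.
Proof.
  unfold unit_box. destruct (j <=? m)%nat; [| lra].
  apply Rlt_le, Rinv_0_lt_compat, sqrt_INR_S_gt0.
Qed.

Lemma sum_n_unit_box_full m : sum_n (unit_box m) m = sqrt (INR (S m)) :> R.
Proof.
  rewrite (sum_n_ext_loc _ (fun _ => / sqrt (INR (S m)))).
  - rewrite sum_n_const.
    pose proof (sqrt_INR_S_sq m) as Hsq. pose proof (sqrt_INR_S_gt0 m).
    set (r := sqrt (INR (S m))) in *. rewrite <- Hsq. field. lra.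
  - intros j Hj. unfold unit_box. now rewrite (proj2 (Nat.leb_le j m) Hj).
Qed.

Lemma sum_n_unit_box_le m k : sum_n (unit_box m) k <= sqrt (INR (S m)).
Proof.
  pose proof (is_series_support _ _ (unit_box_support m)) as Hbox.
  rewrite <- sum_n_unit_box_full, <- (is_series_unique _ _ Hbox).
  apply sum_n_le_Series; [apply unit_box_ge0 | now exists (sum_n (unit_box m) m)].
Qed.

Lemma unit_box_l2 m : is_series (fun j => Cmod (RtoC (unit_box m j)) ^ 2) 1.
Proof.
  assert (sq : forall j, Cmod (RtoC (unit_box m j)) ^ 2 = unit_box m j ^ 2)
    by (intros j; now rewrite Cmod_R, pow2_abs).
  apply (is_series_ext (fun j => unit_box m j ^ 2)); [intros j; now rewrite sq |].
  replace 1 with (sum_n (fun j => unit_box m j ^ 2) m).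
  - apply is_series_support. intros n Hn. rewrite unit_box_support by exact Hn. ring.
  - rewrite (sum_n_ext_loc _ (fun _ => / INR (S m))).
    + rewrite sum_n_const. apply Rinv_r, not_0_INR. lia.
    + intros j Hj. unfold unit_box. rewrite (proj2 (Nat.leb_le j m) Hj).
      now rewrite pow_inv, sqrt_INR_S_sq.
Qed.

Lemma rhaly_unit_box_ge alpha m : in_l2 alpha ->
  in_l2 (rhaly alpha (fun j => RtoC (unit_box m j))) /\
  J0_term alpha m <= l2norm (rhaly alpha (fun j => RtoC (unit_box m j))).
Proof.
  intros Halpha.
  set (f := fun j => RtoC (unit_box m j)).
  set (w := fun k => Cmod (alpha k) ^ 2).
  assert (w_ge0 : forall k, 0 <= w k) by (intros k; apply pow2_ge_0).
  assert (psum_f : forall k, psum f k = RtoC (sum_n (unit_box m) k)).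
  { induction k as [| k IH]; simpl.
    - now rewrite sum_O.
    - now rewrite IH, sum_Sn_R, RtoC_plus. }
  assert (Rf_sq : forall k, Cmod (rhaly alpha f k) ^ 2 = w k * sum_n (unit_box m) k ^ 2).
  { intros k. unfold rhaly. rewrite Cmod_mult, Rpow_mult_distr, psum_f, Cmod_R.
    now rewrite pow2_abs. }
  assert (Rf_le : forall k, Cmod (rhaly alpha f k) ^ 2 <= INR (S m) * w k).
  { intros k. rewrite Rf_sq, Rmult_comm, <- sqrt_INR_S_sq.
    apply Rmult_le_compat_r; [apply w_ge0 |].
    apply pow_incr. split; [| apply sum_n_unit_box_le].
    apply sum_n_ge0, unit_box_ge0. }
  assert (HR : in_l2 (rhaly alpha f)).
  { apply (ex_series_le_nonneg _ (fun k => pow2_ge_0 _) _ Rf_le).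
    exact (ex_series_scal_l (INR (S m)) w Halpha). }
  split; [exact HR |].
  rewrite <- (sqrt_pow2 (J0_term alpha m)) by apply J0_term_ge0.
  rewrite J0_term_sq by exact Halpha.
  unfold l2norm. apply sqrt_le_1_alt.
  rewrite <- Series_scal_l.
  rewrite (Series_ext _ (fun n => Cmod (rhaly alpha f (n + m)%nat) ^ 2)).
  - apply (Series_shift_le (fun k => Cmod (rhaly alpha f k) ^ 2));
      [intros k; apply pow2_ge_0 | exact HR].
  - intros n. rewrite Rf_sq, (sum_n_support _ m), sum_n_unit_box_full, sqrt_INR_S_sq.
    + apply Rmult_comm.
    + apply unit_box_support.
    + lia.
Qed.

Lemma J0_term_le_J0 alpha m : Rbar_le (J0_term alpha m) (J0 alpha).
Proof. exact (proj1 (Lub_Rbar_correct _) _ (ex_intro _ m eq_refl)). Qed.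

Lemma J0_finite alpha : J0 alpha <> p_infty ->
  exists J, J0 alpha = Finite J /\ forall m, J0_term alpha m <= J.
Proof.
  intros Hfin. pose proof (J0_term_le_J0 alpha) as Hub.
  destruct (J0 alpha) as [J | |].
  - now exists J.
  - contradiction.
  - destruct (Hub 0%nat).
Qed.

Lemma J0_le_rhaly_norm alpha : in_l2 alpha -> Rbar_le (J0 alpha) (rhaly_norm alpha).
Proof.
  intros Halpha. apply (proj2 (Lub_Rbar_correct _)). intros x [m ->].
  set (f := fun j => RtoC (unit_box m j)).
  destruct (rhaly_unit_box_ge alpha m Halpha) as [_ Hle].
  apply Rbar_le_trans with (Finite (l2norm (rhaly alpha f))); [exact Hle |].
  apply (proj1 (Lub_Rbar_correct _)). exists f. repeat split.
  - exact (ex_intro _ 1 (unit_box_l2 m)).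
  - unfold l2norm, f. rewrite (is_series_unique _ _ (unit_box_l2 m)). apply sqrt_1.
Qed.

Lemma rhaly_norm_le alpha M :
  (forall f, in_l2 f -> l2norm (rhaly alpha f) <= M * l2norm f) ->
  Rbar_le (rhaly_norm alpha) (Finite M).
Proof.
  intros HM. apply (proj2 (Lub_Rbar_correct _)). intros x (f & Hf & Hn & ->).
  specialize (HM f Hf). rewrite Hn, Rmult_1_r in HM. exact HM.
Qed.

Theorem theorem2p3 (alpha : nat -> C) (Halpha : in_l2 alpha) :
  (rhaly_bounded alpha <-> J0 alpha <> p_infty) /\
  (rhaly_bounded alpha ->
     Rbar_le (J0 alpha) (rhaly_norm alpha) /\
     Rbar_le (rhaly_norm alpha) (Rbar_mult (Finite (2 * sqrt 2)) (J0 alpha))).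
Proof.
  assert (J0_fin : rhaly_bounded alpha -> J0 alpha <> p_infty).
  { intros [M HM] HJ.
    pose proof (J0_le_rhaly_norm alpha Halpha) as Hlow. rewrite HJ in Hlow.
    pose proof (rhaly_norm_le alpha M (fun f Hf => proj2 (HM f Hf))) as Hup.
    destruct (rhaly_norm alpha); easy. }
  split; [split |].
  - exact J0_fin.
  - intros HJ. destruct (J0_finite alpha HJ) as (J & _ & HJm).
    exists (2 * J). exact (rhaly_l2_le alpha J Halpha HJm).
  - intros Hb. split; [exact (J0_le_rhaly_norm alpha Halpha) |].
    destruct (J0_finite alpha (J0_fin Hb)) as (J & -> & HJm).
    apply Rbar_le_trans with (Finite (2 * J)).
    + apply rhaly_norm_le. intros f Hf. exact (proj2 (rhaly_l2_le alpha J Halpha HJm f Hf)).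
    + pose proof (Rle_trans _ _ _ (J0_term_ge0 alpha 0) (HJm 0%nat)).
      assert (1 <= sqrt 2) by (rewrite <- sqrt_1; apply sqrt_le_1_alt; lra).
      simpl. nra.
Qed.
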